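(* For every $n \geq 3$, the $n$-sun $S_n$ is in $B_2^m$.
   Context: For $n\ge 3$, the $n$-sun $S_n$ is the graph with vertex set $\{x_1,\dots,x_n,y_1,\dots,y_n\}$ and edge set consisting of all edges $\{x_i,x_j\}$ for $1\le i<j\le n$, the edges $\{x_i,y_i\},\{x_{i+1},y_i\}$ for $1\le i<n$, and the edges $\{x_1,y_n\},\{x_n,y_n\}$. An EPG representation of a graph is a set of paths on a rectangular grid (sequences of grid points joined consecutively by grid edges), one per vertex, such that two vertices are adjacent iff their paths share a grid edge. A bend is a point of a path where a horizontal and a vertical grid edge of the path meet. A path is monotonic if it is ascending in both columns and rows. $B_k^m$ is the class of graphs having an EPG representation in which every path is monotonic and has at most $k$ bends. *)

From mathcomp Require Import all_boot.
Set Implicit Arguments. Unset Strict Implicit. Unset Printing Implicit Defensive.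

(* Grid points are pairs (column, row) of naturals; any finite set of paths
   lives in a finite rectangular grid, so this is the rectangular grid. *)
Definition point := (nat * nat)%type.

Definition grid_adj (p q : point) : bool :=
  ((p.1 == q.1) && ((p.2.+1 == q.2) || (q.2.+1 == p.2))) ||
  ((p.2 == q.2) && ((p.1.+1 == q.1) || (q.1.+1 == p.1))).

Definition edges (s : seq point) : seq (point * point) := zip s (behead s).

Definition grid_path (s : seq point) : bool :=
  (1 < size s) && all (fun e => grid_adj e.1 e.2) (edges s).

Definition horizontal (e : point * point) : bool := e.1.2 == e.2.2.

Definition bends (s : seq point) : nat :=
  count (fun ee : (point * point) * (point * point) =>
           horizontal ee.1 != horizontal ee.2)
        (zip (edges s) (behead (edges s))).

Definition monotonic (s : seq point) : bool :=
  all (fun e : point * point => (e.1.1 <= e.2.1) && (e.1.2 <= e.2.2)) (edges s).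

Definition share_edge (s t : seq point) : bool :=
  has (fun e => has (fun f => (e == f) || (e == (f.2, f.1))) (edges t)) (edges s).

(* B_k^m : graphs with an EPG representation by monotonic paths with
   at most k bends. A graph is a finite vertex type with adjacency relation. *)
Definition in_Bkm (k : nat) (V : finType) (adj : rel V) : Prop :=
  exists P : V -> seq point,
    (forall v, [/\ grid_path (P v), monotonic (P v) & bends (P v) <= k]) /\
    (forall u v, u != v -> (adj u v <-> share_edge (P u) (P v))).

(* The n-sun: inl i = x_(i+1), inr i = y_(i+1), for i : 'I_n (0-indexed).
   x's form a clique; y_i is adjacent to x_i and x_(i+1 mod n). *)
Arguments edges : clear implicits.
Definition sun_adj (n : nat) : rel ('I_n + 'I_n) :=
  fun u v =>
    match u, v with
    | inl i, inl j => i != j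
    | inl i, inr j => (nat_of_ord i == j) || (nat_of_ord i == j.+1 %% n)
    | inr i, inl j => (nat_of_ord j == i) || (nat_of_ord j == i.+1 %% n)
    | inr _, inr _ => false
    end.
Arguments sun_adj n : clear implicits.
Arguments in_Bkm k V adj : clear implicits.

From mathcomp Require Import all_boot zify.

(* Every path is a walk: a start point and a word of unit moves (true = right,
   false = up), so it is automatically monotonic and its bends are the letter
   changes of the word.  The clique vertex x_i ("core") climbs column i up to
   row 2n and then runs right to column n: all core paths share the last
   horizontal edge of row 2n.  The vertex y_j ("ray"), whose neighbours are the
   columns lo < hi among {j, j+1 mod n}, takes the vertical edge of column lo
   above row 2j, runs right along row 2j+1 and takes the vertical edge of
   column hi above row 2j+1; these vertical edges lie on x_lo and x_hi only,
   the horizontal row 2j+1 < 2n is private, and distinct rays live in disjoint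
   row bands {2j, 2j+1}.  Core paths bend once, rays twice. *)

Definition step (p : point) (right : bool) : point :=
  if right then (p.1.+1, p.2) else (p.1, p.2.+1).

Definition walk (p : point) (ms : seq bool) : seq point := p :: scanl step p ms.

Definition steps (p : point) (ms : seq bool) : seq (point * bool) := zip (walk p ms) ms.

Definition turns (ms : seq bool) : nat :=
  count (fun mm : bool * bool => mm.1 != mm.2) (zip ms (behead ms)).

Lemma steps_cons p m ms : steps p (m :: ms) = (p, m) :: steps (step p m) ms.
Proof. by []. Qed.

Lemma steps_cat p ms1 ms2 :
  steps p (ms1 ++ ms2) = steps p ms1 ++ steps (foldl step p ms1) ms2.
Proof. by elim: ms1 p => [|m ms1 IH] p //=; rewrite steps_cons IH. Qed.

Lemma foldl_step_nseq p d k :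
  foldl step p (nseq k d) = if d then (p.1 + k, p.2) else (p.1, p.2 + k).
Proof.
by case: d; elim: k p => [|k IH] [a b] //=; rewrite ?addn0 // IH /= addSnnS.
Qed.

Lemma mem_steps_nseq p d k q m :
  ((q, m) \in steps p (nseq k d)) =
  (m == d) && (if d then (q.2 == p.2) && (p.1 <= q.1 < p.1 + k)
               else (q.1 == p.1) && (p.2 <= q.2 < p.2 + k)).
Proof.
case: q => x y; elim: k p => [|k IH] [a b].
  by case: d; rewrite /= addn0 ltnNge andbN !andbF.
rewrite /= steps_cons in_cons {}IH.
by case: d; case: m; rewrite /= !xpair_eqE /= ?andbT ?andbF //; lia.
Qed.

Lemma edges_walk p ms : edges (walk p ms) = [seq (s.1, step s.1 s.2) | s <- steps p ms].
Proof. by elim: ms p => [|m ms IH] p //=; rewrite -IH; case: ms {IH}. Qed.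

Lemma step_edge_eq q m q' m' :
  ((q, step q m) == (q', step q' m')) || ((q, step q m) == (step q' m', q')) =
  ((q, m) == (q', m')).
Proof. by case: q q' => [a b] [c d]; case: m m' => -[]; rewrite /= !xpair_eqE /=; lia. Qed.

Lemma share_edge_walk p ms p' ms' :
  share_edge (walk p ms) (walk p' ms') = has [in steps p' ms'] (steps p ms).
Proof.
rewrite /share_edge !edges_walk has_map; apply: eq_has => -[q m] /=.
rewrite has_map -has_pred1; apply: eq_has => -[q' m'] /=.
by rewrite step_edge_eq eq_sym.
Qed.

Lemma share_edgeC s t : share_edge s t = share_edge t s.
Proof.
suff sym u v : share_edge u v -> share_edge v u by apply/idP/idP; apply: sym.
case/hasP => e ue /hasP [f vf ef]; apply/hasP; exists f => //; apply/hasP; exists e => //.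
by case: f {vf} ef => a b /orP [] /eqP ->; rewrite eqxx ?orbT.
Qed.

Lemma grid_path_walk p ms : grid_path (walk p ms) = (ms != [::]).
Proof.
case: ms => [|m ms] //; rewrite /grid_path edges_walk all_map.
by apply/allP => -[[a b] []] _; rewrite /grid_adj /= !eqxx ?orbT.
Qed.

Lemma monotonic_walk p ms : monotonic (walk p ms).
Proof.
by rewrite /monotonic edges_walk all_map; apply/allP => -[[a b] []] _ /=; rewrite !leqnSn !leqnn.
Qed.

Lemma horizontal_step q m : horizontal (q, step q m) = m.
Proof. by case: m; rewrite /horizontal /= ?eqxx // (ltn_eqF (ltnSn _)). Qed.

Lemma bends_walk p ms : bends (walk p ms) = turns ms.
Proof.
elim: ms p => [|m [|m' ms] IH] p //.
have -> : bends (walk p [:: m, m' & ms]) =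
  (horizontal (p, step p m) != horizontal (step p m, step (step p m) m'))
  + bends (walk (step p m) (m' :: ms)) by [].
by rewrite !horizontal_step IH.
Qed.

Lemma turns_cons m ms : turns (m :: ms) = (if ms is m' :: _ then m != m' else false) + turns ms.
Proof. by case: ms. Qed.

Lemma turns_nseq k d : turns (nseq k d) = 0.
Proof. by elim: k => [|k IH] //; rewrite turns_cons IH; case: k {IH} => //=; rewrite eqxx. Qed.

Lemma turns_cat s t : turns (s ++ t) <= turns s + turns t + 1.
Proof.
elim: s => [|m s IH]; first by rewrite add0n leq_addr.
rewrite cat_cons !turns_cons; case: s IH => [|m' s] IH.
  by case: t {IH} => [|m' t] //; rewrite addnC leq_add2l leq_b1.
by rewrite -!addnA leq_add2l addnA.
Qed.

Section SunRepresentation.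

Variable n : nat.

Definition ray_lo (j : nat) : nat := minn j (j.+1 %% n).
Definition ray_hi (j : nat) : nat := maxn j (j.+1 %% n).

Definition core_moves (i : nat) : seq bool := nseq n.*2 false ++ nseq (n - i) true.
Definition ray_moves (j : nat) : seq bool :=
  [:: false] ++ nseq (ray_hi j - ray_lo j) true ++ [:: false].

Definition sun_path (v : 'I_n + 'I_n) : seq point :=
  match v with
  | inl i => walk (i : nat, 0) (core_moves i)
  | inr j => walk (ray_lo j, j.*2) (ray_moves j)
  end.

Lemma mem_core_steps i q m : i <= n ->
  ((q, m) \in steps (i, 0) (core_moves i)) =
  if m then (q.2 == n.*2) && (i <= q.1 < n) else (q.1 == i) && (q.2 < n.*2).
Proof.
move=> le_in; rewrite steps_cat mem_cat !mem_steps_nseq foldl_step_nseq /=.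
by case: m; lia.
Qed.

Lemma mem_ray_steps j q m :
  ((q, m) \in steps (ray_lo j, j.*2) (ray_moves j)) =
  if m then (q.2 == j.*2.+1) && (ray_lo j <= q.1 < ray_hi j)
  else (q == (ray_lo j, j.*2)) || (q == (ray_hi j, j.*2.+1)).
Proof.
have lo_hi : ray_lo j <= ray_hi j by rewrite /ray_lo /ray_hi; lia.
rewrite steps_cons steps_cat foldl_step_nseq in_cons mem_cat mem_steps_nseq mem_seq1.
case: q => a b; rewrite !xpair_eqE /=; case: m => /=; lia.
Qed.

Lemma sun_path_valid v :
  [/\ grid_path (sun_path v), monotonic (sun_path v) & bends (sun_path v) <= 2].
Proof.
rewrite /sun_path; case: v => [i|j]; rewrite grid_path_walk monotonic_walk bends_walk.
  split=> //; last by apply: leq_trans (turns_cat _ _) _; rewrite !turns_nseq.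
  by rewrite -size_eq0 size_cat !size_nseq; have := ltn_ord i; lia.
split=> //; apply: leq_trans (turns_cat _ _) _.
rewrite (turns_nseq 1 false) add0n -[2]/(1 + 1) leq_add2r.
by apply: leq_trans (turns_cat _ _) _; rewrite turns_nseq (turns_nseq 1 false).
Qed.

Lemma ray_ends j c : (c == ray_lo j) || (c == ray_hi j) = (c == j) || (c == j.+1 %% n).
Proof. by rewrite /ray_lo /minn /ray_hi /maxn; case: ltnP => _ //; rewrite orbC. Qed.

Lemma core_core_share (i j : 'I_n) : share_edge (sun_path (inl i)) (sun_path (inl j)).
Proof.
have lt_in := ltn_ord i; have lt_jn := ltn_ord j.
rewrite share_edge_walk; apply/hasP; exists ((n.-1, n.*2), true);
  by rewrite mem_core_steps /= ?eqxx; [lia | exact: ltnW].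
Qed.

Lemma core_ray_share (i j : 'I_n) :
  share_edge (sun_path (inl i)) (sun_path (inr j)) = (i == j :> nat) || (i == j.+1 %% n :> nat).
Proof.
have lt_jn := ltn_ord j; have le_in := ltnW (ltn_ord i).
rewrite share_edge_walk -ray_ends; apply/hasP/idP.
  case=> -[[a b] []]; rewrite mem_core_steps // mem_ray_steps /=.
    by case/andP=> /eqP -> _ /andP [/eqP odd_row _]; exfalso; lia.
  case/andP=> /eqP <- _; rewrite !xpair_eqE.
  by case/orP=> /andP [/eqP -> _]; rewrite eqxx ?orbT.
case/orP=> /eqP i_end; [exists ((i : nat, j.*2), false) | exists ((i : nat, j.*2.+1), false)];
  by rewrite ?mem_core_steps ?mem_ray_steps //= i_end eqxx ?orbT //; lia.
Qed.

Lemma ray_steps_row j q m : (q, m) \in steps (ray_lo j, j.*2) (ray_moves j) -> q.2./2 = j.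
Proof.
rewrite mem_ray_steps; case: q m => a b [/andP [/eqP -> _] | ] /=; first lia.
by rewrite !xpair_eqE => /orP [] /andP [_ /eqP ->] /=; lia.
Qed.

Lemma ray_ray_share (i j : 'I_n) : share_edge (sun_path (inr i)) (sun_path (inr j)) -> i = j.
Proof.
rewrite share_edge_walk => /hasP [[q m] /ray_steps_row row_i /ray_steps_row row_j].
by apply: val_inj; rewrite /= -row_i -row_j.
Qed.

End SunRepresentation.

Theorem theorem3p8 (n : nat) : 3 <= n -> in_Bkm 2 _ (sun_adj n).
Proof.
(* The construction works for every n. *)
move=> _; exists (sun_path n); split; first exact: sun_path_valid.
case=> i [] j neq_ij.
- by split=> // _; apply: core_core_share.
- by rewrite core_ray_share.
- by rewrite share_edgeC core_ray_share.
- by split=> // /ray_ray_share eq_ij; rewrite eq_ij eqxx in neq_ij.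
Qed.
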